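(* Let $d\ge1$, $k\ge d+2$ and $\alpha\in(0,1)$. Then there exist absolutely continuous probability measures $\mu_1,\dots,\mu_k$ on $\mathbb R^d$ such that there is no convex set $C\subset\mathbb R^d$ with $\mu_1(C)=\dots=\mu_k(C)=\alpha$. *)

From Stdlib Require Import Reals Lra Lia.
From Stdlib Require Vectors.Fin.
Open Scope R_scope.

Definition point (d : nat) := Fin.t d -> R.
Definition rset (d : nat) := point d -> Prop.

(* Open sets (sup-norm balls; same topology as the Euclidean one). *)
Definition is_open {d : nat} (U : rset d) : Prop :=
  forall x, U x -> exists r, 0 < r /\
    forall y : point d, (forall i, Rabs (y i - x i) < r) -> U y.

Inductive borel {d : nat} : rset d -> Prop :=
| borel_open : forall U, is_open U -> borel U
| borel_compl : forall A, borel A -> borel (fun x => ~ A x)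
| borel_cunion : forall A : nat -> rset d, (forall n, borel (A n)) ->
    borel (fun x => exists n, A n x).

(* Lebesgue null sets: coverable by countably many closed cubes
   (center c n, half-side r n) of total volume (2 r n)^d at most eps. *)
Definition lebesgue_null {d : nat} (N : rset d) : Prop :=
  forall eps, 0 < eps -> exists (c : nat -> point d) (r : nat -> R),
    (forall n, 0 <= r n) /\
    (forall m, sum_f_R0 (fun n => (2 * r n) ^ d) m <= eps) /\
    (forall x, N x -> exists n, forall i, Rabs (x i - c n i) <= r n).

(* Lebesgue measurable sets: Borel up to a null set (the completion). *)
Definition lebesgue_measurable {d : nat} (A : rset d) : Prop :=
  exists B N, borel B /\ lebesgue_null N /\
    forall x, ~ N x -> (A x <-> B x).

(* A probability measure on the Lebesgue sigma-algebra of R^d,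
   given as a set function (values on non-measurable sets are irrelevant). *)
Definition is_probability_measure {d : nat} (mu : rset d -> R) : Prop :=
  (forall A, lebesgue_measurable A -> 0 <= mu A) /\
  mu (fun _ => True) = 1 /\
  (forall A : nat -> rset d,
     (forall n, lebesgue_measurable (A n)) ->
     (forall m n x, m <> n -> A m x -> A n x -> False) ->
     Un_cv (fun m => sum_f_R0 (fun n => mu (A n)) m)
           (mu (fun x => exists n, A n x))).

Definition abs_continuous {d : nat} (mu : rset d -> R) : Prop :=
  forall N : rset d, lebesgue_null N -> mu N = 0.

Definition ac_probability_measure {d : nat} (mu : rset d -> R) : Prop :=
  is_probability_measure mu /\ abs_continuous mu.

Definition convex {d : nat} (C : rset d) : Prop :=
  forall x y : point d, C x -> C y -> forall t, 0 <= t <= 1 ->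
    C (fun i => t * x i + (1 - t) * y i).

(* Let L = 4d + 14, let v_0 = 0 and v_(i+1) = L e_i be the
   vertices of a large simplex, and let mu_j (j <= d) be the uniform measure on
   the cube v_j + [0, 1/2]^d, while mu_j (j > d) is uniform on [1, 2]^d.
   If mu_j(C) = alpha > 0 for all j <= d, the convex set C meets all the small
   cubes near the vertices, and then it contains [1, 2]^d, so mu_(d+1)(C) = 1,
   contradicting alpha < 1. *)

From Pilot Require Import Defs.
From Stdlib Require Import Reals.
Open Scope R_scope.
From HB Require Import structures.
From mathcomp Require all_boot all_order all_algebra all_classical all_reals all_analysis measurable_realfun.
From mathcomp Require Rstruct Rstruct_topology.
From mathcomp Require ring lra.
From Stdlib Require Import Lra Lia FunctionalExtensionality ClassicalEpsilon.

Definition in_cube {d : nat} (p : point d) (s : R) (y : point d) : Prop :=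
  forall i, p i <= y i <= p i + s.

Module UniformCube.
Import all_boot all_order all_algebra all_classical all_reals all_analysis measurable_realfun Rstruct Rstruct_topology.
Import ring lra.
Set Implicit Arguments. Unset Strict Implicit. Unset Printing Implicit Defensive.
Import Order.TTheory GRing.Theory Num.Theory.
Import numFieldNormedType.Exports.
Local Open Scope classical_set_scope.
Local Open Scope ring_scope.
Local Notation T := (measurableTypeR R).

Definition U01 : probability T R := uniform_prob (@ltr01 R).

(* U01 is dominated by Lebesgue measure, since its density is at most 1. *)
Lemma U01_le_lebesgue (A : set T) : measurable A -> (U01 A <= lebesgue_measure A)%E.
Proof.
move=> mA; rewrite /U01 /uniform_prob.
apply: (@le_trans _ _ (\int[lebesgue_measure]_(x in A) (cst 1%E x))%E).
  apply: ge0_le_integral => //=.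
  - by move=> x _; rewrite lee_fin uniform_pdf_ge0.
  - by apply/measurable_EFinP/measurable_funTS; exact: measurable_uniform_pdf.
  - move=> x _; rewrite lee_fin /uniform_pdf; case: ifPn => _; last by [].
    by rewrite subr0 invr1.
by rewrite integral_cst//= mul1e.
Qed.

Lemma U01_itv (a r : R) : 0 <= r -> (U01 `[a, (a + r)%R]%classic <= r%:E)%E.
Proof.
move=> r0; apply: le_trans (U01_le_lebesgue (measurable_itv _)) _.
rewrite lebesgue_measure_itv /= lte_fin.
case: ifPn => _; last by rewrite lee_fin.
by rewrite -EFinD addrAC subrr add0r.
Qed.

Lemma U01_01 : U01 `[0, 1]%classic = 1%E.
Proof.
exact: (@integral_uniform_pdf1 R 0 1 `[0, 1]%classic (@ltr01 R) (@subset_refl _ _)).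
Qed.

Definition consf n (p : T * n.-tuple T) : n.+1.-tuple T := [tuple of p.1 :: p.2].

Lemma measurable_consf n : measurable_fun setT (@consf n).
Proof. exact: measurable_cons. Qed.

HB.instance Definition _ n :=
  isMeasurableFun.Build _ _ _ _ (@consf n) (@measurable_consf n).

Fixpoint cube_prob n : probability (n.-tuple T) R :=
  match n with
  | 0 => \d_([tuple] : 0.-tuple T)
  | n'.+1 => distribution (U01 \x cube_prob n')%E (@consf n')
  end.

Lemma cube_probS n (A : set (n.+1.-tuple T)) :
  cube_prob n.+1 A = (U01 \x cube_prob n)%E (@consf n @^-1` A).
Proof. by []. Qed.

Definition box n (a : 'I_n -> R) (r : R) : set (n.-tuple T) :=
  [set t | forall i, a i <= tnth t i <= a i + r].
Arguments box : clear implicits.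

Definition unit_box n := box n (fun=> 0) 1.
Arguments unit_box : clear implicits.

Lemma measurable_box n a r : measurable (box n a r).
Proof.
have -> : box n a r =
    \bigcap_(i in [set: 'I_n]) ((fun t => tnth t i) @^-1` `[a i, a i + r]%classic).
  apply/seteqP; split => t /=.
    by move=> H i _; rewrite /= in_itv /=; exact: H.
  by move=> H i; have := H i I; rewrite /= in_itv /=.
apply: fin_bigcap_measurable => // i _; rewrite -[X in measurable X]setTI.
exact: (@measurable_tnth _ T n i) _ (measurable_itv _).
Qed.

Lemma consf_box n a r : @consf n @^-1` box n.+1 a r =
  `[a ord0, a ord0 + r]%classic `*` box n (fun i => a (lift ord0 i)) r.
Proof.
apply/seteqP; split => -[x t] /=.
  move=> H; split; first by have := H ord0; rewrite in_itv.
  by move=> i; have := H (lift ord0 i); rewrite tnthS.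
rewrite in_itv /= => -[H0 H] i.
by case: (unliftP ord0 i) => [j ->|->]; [rewrite tnthS; exact: H | exact: H0].
Qed.

Lemma cube_prob_box n a r : 0 <= r -> (cube_prob n (box n a r) <= (r ^+ n)%:E)%E.
Proof.
move=> r0; elim: n a => [|n IH] a.
  by rewrite /= /dirac expr0 indicE; case: (_ \in _); rewrite lee_fin.
rewrite cube_probS consf_box product_measure1E ?exprS ?EFinM;
  [|exact: measurable_itv|exact: measurable_box].
by apply: lee_pmul => //; [exact: U01_itv | exact: IH].
Qed.

Lemma cube_prob_unit_box n : cube_prob n (unit_box n) = 1%E.
Proof.
elim: n => [|n IH].
  have t0 : ([tuple] : 0.-tuple T) \in unit_box 0 by apply/mem_set => -[].
  by rewrite /= /dirac indicE t0.
rewrite cube_probS consf_box product_measure1E;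
  [|exact: measurable_itv|exact: measurable_box].
rewrite add0r /= (_ : cube_prob n _ = 1%E); last exact: IH.
by rewrite mule1; exact: U01_01.
Qed.

Lemma cube_prob_outside n : cube_prob n (~` unit_box n) = 0%E.
Proof.
by rewrite probability_setC ?cube_prob_unit_box ?subee //; exact: measurable_box.
Qed.

(* It is needed because the pullback of a Lebesgue-measurable set
   need not be measurable for the product sigma-algebra on tuples. *)
Section outer_measure.
Variable n : nat.
Local Notation P := (cube_prob n).

Definition out (S : set (n.-tuple T)) : \bar R :=
  ereal_inf [set P M | M in [set M | measurable M /\ S `<=` M]].

Lemma out_le S M : measurable M -> S `<=` M -> (out S <= P M)%E.
Proof. by move=> mM SM; apply: ereal_inf_lbound; exists M. Qed.

Lemma out_ge S x :
  (forall M, measurable M -> S `<=` M -> (x <= P M)%E) -> (x <= out S)%E.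
Proof. by move=> H; apply: le_ereal_inf_tmp => _ [M [mM SM] <-]; exact: H. Qed.

Lemma out_ge0 S : (0 <= out S)%E.
Proof. by apply: out_ge => M mM _; exact: measure_ge0. Qed.

Lemma out_le1 S : (out S <= 1)%E.
Proof. by rewrite -(probability_setT P); apply: out_le. Qed.

Lemma out_finite S : (fine (out S))%:E = out S.
Proof.
apply: fineK; rewrite ge0_fin_numE ?out_ge0 //.
exact: le_lt_trans (out_le1 S) (ltry _).
Qed.

Lemma out_ae S B Z : measurable B -> P.-negligible Z ->
  (forall t, ~ Z t -> (S t <-> B t)) -> out S = P B.
Proof.
move=> mB [N [mN PN0 ZN]] SB.
have up M : measurable M -> (P (M `|` N) <= P M)%E.
  move=> mM; apply: le_trans (measureU2 _ mM mN) _.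
  by change (P M + P N <= P M)%E; rewrite PN0 adde0.
apply/eqP; rewrite eq_le; apply/andP; split.
  apply: le_trans (up _ mB); apply: out_le => [|t St]; first exact: measurableU.
  by have [Zt|nZt] := pselect (Z t); [right; exact: ZN | left; apply/(SB t nZt)].
apply: out_ge => M mM SM.
apply: le_trans (up _ mM); apply: le_measure.
- by rewrite inE.
- by rewrite inE; exact: measurableU.
- move=> t Bt; have [Zt|nZt] := pselect (Z t); first by right; exact: ZN.
  by left; apply: SM; apply/(SB t nZt).
Qed.

Lemma out_measurable M : measurable M -> out M = P M.
Proof.
by move=> mM; apply: (out_ae (Z := set0)) => //; exact: negligible_set0.
Qed.

End outer_measure.

Lemma sum_f_R0_big (f : nat -> R) m : sum_f_R0 f m = \sum_(0 <= i < m.+1) f i.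
Proof.
elim: m => [|m IH]; first by rewrite big_nat1.
by rewrite big_nat_recr //= -IH.
Qed.

Lemma nneseries_le_bound (g : nat -> R) (e : R) : (forall i, 0 <= g i) ->
  (forall m, \sum_(0 <= i < m) g i <= e) -> (\sum_(i <oo) (g i)%:E <= e%:E)%E.
Proof.
move=> g0 H; apply: lime_le.
  by apply: is_cvg_nneseries => i _ _; rewrite lee_fin.
by apply: nearW => m; rewrite sumEFin lee_fin.
Qed.

Lemma cvg_Un_cv (u : nat -> R) (l : R) :
  (fun n => \sum_(0 <= i < n) u i) @ \oo --> l ->
  Un_cv (fun m => sum_f_R0 u m) l.
Proof.
move=> Hc eps eps0.
have [N _ HN] := proj1 (@cvgrPdist_lt _ R^o _ _ eventually_filter _ _) Hc
  eps (introT RltP eps0).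
exists N => n Hn; rewrite /R_dist sum_f_R0_big.
apply/RltP; change (`|\sum_(0 <= i < n.+1) u i - l| < eps); rewrite distrC.
by apply: HN => /=; apply: leq_trans (leqnSn n); exact/ssrnat.leP.
Qed.

Lemma interval_of_dist (p x c rr s : R) : 0 < s -> `|p + s * x - c| <= rr ->
  (c - rr - p) / s <= x <= (c - rr - p) / s + 2 * rr / s.
Proof.
move=> s0; rewrite ler_norml => /andP[h1 h2].
rewrite -mulrDl ler_pdivrMr // ler_pdivlMr // [x * s]mulrC.
by apply/andP; split; lra.
Qed.

Section coordinates.
Variable d : nat.

Definition fin_ord (i : Fin.t d) : 'I_d :=
  Ordinal (introT ssrnat.ltP (proj2_sig (Fin.to_nat i))).
Definition ord_fin (j : 'I_d) : Fin.t d :=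
  Fin.of_nat_lt (elimT ssrnat.ltP (ltn_ord j)).

Lemma ord_finK : cancel ord_fin fin_ord.
Proof. by move=> j; apply: val_inj; rewrite /= Fin.to_nat_of_nat. Qed.

Definition grid_box (z : d.-tuple int) (m : nat) : set (d.-tuple T) :=
  box d (fun j => (tnth z j)%:~R / m.+1%:R) m.+1%:R^-1.

Lemma grid_box_cover m t : exists z, grid_box z m t.
Proof.
exists [tuple Num.floor (tnth t i * m.+1%:R) | i < d] => i.
rewrite tnth_mktuple.
have /andP[h1 h2] := floor_itv (tnth t i * m.+1%:R); rewrite intrD1 in h2.
have -> (a : R) : a / m.+1%:R + m.+1%:R^-1 = (a + 1) / m.+1%:R.
  by rewrite mulrDl mul1r.
by rewrite ler_pdivrMr ?ltr0n // h1 ler_pdivlMr ?ltr0n // ltW.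
Qed.

Lemma grid_box_close z m t t' i : grid_box z m t -> grid_box z m t' ->
  `|tnth t' i - tnth t i| <= m.+1%:R^-1.
Proof.
move=> /(_ i) + /(_ i); set a := _ / _; set c := _^-1.
move=> /andP[h1 h2] /andP[h3 h4].
by rewrite ler_norml; apply/andP; split; lra.
Qed.

End coordinates.

Section pullback.
Variables (d : nat) (p : Defs.point d) (s : R).
Hypothesis s_pos : (0 < s)%coqR.
Let s0 : 0 < s := introT RltP s_pos.

Definition emb (t : d.-tuple T) : Defs.point d := fun i => p i + s * tnth t (fin_ord i).
Definition pre (A : rset d) : set (d.-tuple T) := [set t | A (emb t)].

(* Open sets pull back to countable unions of grid boxes. *)
Lemma measurable_pre_open U : is_open U -> measurable (pre U).
Proof.
move=> oU.
pose G (k : d.-tuple int * nat) :=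
  if `[< grid_box k.1 k.2 `<=` pre U >] then grid_box k.1 k.2 else set0.
have -> : pre U = \bigcup_k G k.
  apply/seteqP; split; last first.
    by move=> t [k _]; rewrite /G; case: asboolP => // H; exact: H.
  move=> t Ut; have [r [/RltP r0 Hr]] := oU _ Ut.
  have [m sm] : exists m : nat, s * m.+1%:R^-1 < r.
    exists (Num.truncn (s / r)).
    by rewrite ltr_pdivrMr ?ltr0n // mulrC -ltr_pdivrMr // truncnS_gt.
  have [z tz] := grid_box_cover m t.
  have sub : grid_box z m `<=` pre U.
    move=> t' zt'; apply: Hr => i; apply/RltP.
    change (`|p i + s * tnth t' (fin_ord i) - (p i + s * tnth t (fin_ord i))| < r).
    rewrite (_ : _ - _ = s * (tnth t' (fin_ord i) - tnth t (fin_ord i))); last by ring.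
    rewrite normrM gtr0_norm //; apply: le_lt_trans sm.
    by apply: (ler_wpM2l (ltW s0)); exact: grid_box_close.
  by exists (z, m) => //; rewrite /G /= asboolT.
apply: countable_bigcupT_measurable; first exact: countableP.
by move=> k; rewrite /G; case: asboolP => _ //; exact: measurable_box.
Qed.

Lemma measurable_pre_borel A : borel A -> measurable (pre A).
Proof.
elim => {A}.
- by move=> U oU; exact: measurable_pre_open.
- by move=> A _ mA; exact: measurableC.
- move=> A _ mA; rewrite (_ : pre _ = \bigcup_n pre (A n)).
    exact: bigcupT_measurable.
  by apply/seteqP; split => t /= [n]; [|move=> _]; exists n.
Qed.

(* A Lebesgue-null set pulls back into measurable sets of arbitrarily small
   mass: a cover by cubes of total volume e s^d pulls back to a cover by boxes
   of total mass at most e. *)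
Lemma pre_null_cover N : lebesgue_null N -> forall e, 0 < e ->
  exists M, [/\ measurable M, pre N `<=` M & (cube_prob d M <= e%:E)%E].
Proof.
move=> HN e e0.
have sd : 0 < s ^+ d by exact: exprn_gt0.
have [c [r [r0 [rsum cov]]]] := HN (e * s ^+ d) (elimT RltP (mulr_gt0 e0 sd)).
have side0 n : 0 <= 2 * r n / s.
  by rewrite divr_ge0 ?(ltW s0) ?mulr_ge0 //; exact/RleP.
pose F n := box d (fun j => (c n (ord_fin j) - r n - p (ord_fin j)) / s) (2 * r n / s).
have mF n : measurable (F n) by exact: measurable_box.
exists (\bigcup_n F n); split; first exact: bigcupT_measurable.
  move=> t /cov [n Hn]; exists n => // j.
  apply: interval_of_dist => //; apply/RleP.
  by have := Hn (ord_fin j); rewrite /emb ord_finK.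
apply: le_trans (measure_sigma_subadditive _ mF (bigcupT_measurable _ mF) (@subset_refl _ _)) _.
apply: (@le_trans _ _ (\sum_(n <oo) ((2 * r n / s) ^+ d)%:E)%E).
  apply: lee_nneseries => [n _ _|n _]; first exact: measure_ge0.
  exact: (cube_prob_box _ (side0 n)).
apply: nneseries_le_bound => [n|m]; first exact: exprn_ge0.
under eq_bigr do rewrite expr_div_n.
rewrite -mulr_suml ler_pdivrMr //.
case: m => [|m]; first by rewrite big_geq // mulr_ge0 ?ltW.
rewrite -sum_f_R0_big; apply/RleP; apply: Rle_trans (rsum m).
by apply: Req_le; congr sum_f_R0; apply: funext => n; rewrite RpowE.
Qed.

Lemma pre_null N : lebesgue_null N -> (cube_prob d).-negligible (pre N).
Proof.
move=> HN.
have cover k : exists M, [/\ measurable M, pre N `<=` M &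
    (cube_prob d M <= (k.+1%:R^-1)%:E)%E].
  by apply: pre_null_cover; rewrite ?invr_gt0.
have [M HM] := choice cover.
have mM k : measurable (M k) by case: (HM k).
exists (\bigcap_k M k); split; first exact: bigcapT_measurable.
  apply/eqP; rewrite eq_le measure_ge0 andbT.
  apply/lee_addgt0Pr => e e0; rewrite add0e.
  pose k := Num.truncn e^-1.
  have ke : k.+1%:R^-1 <= e.
    by rewrite -div1r ler_pdivrMr // mulrC -ler_pdivrMr // div1r ltW // truncnS_gt.
  apply: (@le_trans _ _ (cube_prob d (M k))).
    by apply: le_measure; rewrite ?inE //; [exact: bigcapT_measurable|exact: bigcap_inf].
  by case: (HM k) => _ _ Mk; apply: le_trans Mk _; rewrite lee_fin.
by move=> t Nt k _; case: (HM k) => _ + _; apply.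
Qed.

Lemma pre_lebesgue_measurable A : lebesgue_measurable A ->
  exists B, exists Z, [/\ measurable B, (cube_prob d).-negligible Z &
                          forall t, ~ Z t -> (pre A t <-> B t)].
Proof.
move=> [B [N [bB [nN AB]]]]; exists (pre B), (pre N); split.
- exact: measurable_pre_borel.
- exact: pre_null.
- by move=> t; exact: AB.
Qed.

(* The uniform probability measure on the cube with corner p and side s: the
   outer cube_prob-measure of the pullback along emb. *)
Definition cube_measure (A : rset d) : R := fine (out (pre A)).

Lemma cube_measureE A : (cube_measure A)%:E = out (pre A).
Proof. exact: out_finite. Qed.

Lemma cube_measure_ge0 A : (0 <= cube_measure A)%coqR.
Proof. by apply/RleP; apply: fine_ge0; exact: out_ge0. Qed.

Lemma cube_measure_setT : cube_measure (fun _ => True) = 1%coqR.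
Proof.
by rewrite /cube_measure (_ : pre _ = setT) // out_measurable // probability_setT.
Qed.

Lemma cube_measure_null N : lebesgue_null N -> cube_measure N = 0%coqR.
Proof.
move=> /pre_null [M [mM M0 NM]]; rewrite /cube_measure (_ : out _ = 0%E) //.
apply/eqP; rewrite eq_le out_ge0 andbT; apply: le_trans (out_le mM NM) _.
by change (cube_prob d M <= 0)%E; rewrite M0.
Qed.

(* Countable additivity: all the pullbacks are measurable outside one common
   negligible set M0, and off M0 they are pairwise disjoint measurable sets. *)
Lemma cube_measure_additive (A : nat -> rset d) :
  (forall n, lebesgue_measurable (A n)) ->
  (forall m n x, m <> n -> A m x -> A n x -> False) ->
  Un_cv (fun m => sum_f_R0 (fun n => cube_measure (A n)) m)
        (cube_measure (fun x => exists n, A n x)).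
Proof.
move=> mA disjA.
have [B HB] := choice (fun n => pre_lebesgue_measurable (mA n)).
have [Z HZ] := choice HB.
have [M0 [mM0 M00 ZM0]] : (cube_prob d).-negligible (\bigcup_n Z n).
  by apply: negligible_bigcup => n; case: (HZ n).
have nM0 : (cube_prob d).-negligible M0 by exists M0; split.
pose B' n := B n `\` M0.
have mB' n : measurable (B' n) by apply: measurableD => //; case: (HZ n).
have agree n t : ~ M0 t -> (pre (A n) t <-> B' n t).
  move=> t0; have nZ : ~ Z n t by move=> z; apply: t0; apply: ZM0; exists n.
  by case: (HZ n) => _ _ /(_ t nZ) AB; split => [/AB|[/AB]].
have outA n : out (pre (A n)) = cube_prob d (B' n) := out_ae (mB' n) nM0 (agree n).
have outU : out (pre (fun x => exists n, A n x)) = cube_prob d (\bigcup_n B' n).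
  apply: out_ae (bigcupT_measurable _ mB') nM0 _ => t t0.
  by split => -[n]; [|move=> _] => An; exists n => //; apply/(agree n t t0).
have tB : trivIset setT B'.
  apply/trivIsetP => i j _ _ ij; apply/seteqP; split => // t [Bi Bj].
  have t0 : ~ M0 t by case: Bi.
  exfalso; apply: (disjA i j _ _ ((agree i t t0).2 Bi) ((agree j t t0).2 Bj)).
  exact/eqP.
have sums : (fun n => \sum_(0 <= i < n) cube_prob d (B' i)) =
            (fun n => (\sum_(0 <= i < n) cube_measure (A i))%:E).
  by apply: funext => n; rewrite -sumEFin; apply: eq_bigr => i _; rewrite cube_measureE outA.
have union : cube_prob d (\bigcup_n B' n) =
             (cube_measure (fun x => exists n, A n x))%:E by rewrite cube_measureE outU.
have : (fun n => (\sum_(0 <= i < n) cube_measure (A i))%:E) @ \oo -->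
       (cube_measure (fun x => exists n, A n x))%:E.
  by rewrite -sums -union; exact: measure_sigma_additive.
move=> /fine_cvgP[_].
by rewrite (_ : fine \o _ = fun n => \sum_(0 <= i < n) cube_measure (A i)) //; exact: cvg_Un_cv.
Qed.

Lemma cube_measure_ac : ac_probability_measure cube_measure.
Proof.
split; [split; [|split] |].
- by move=> A _; exact: cube_measure_ge0.
- exact: cube_measure_setT.
- exact: cube_measure_additive.
- exact: cube_measure_null.
Qed.

Lemma emb_unit_box t : unit_box d t -> in_cube p s (emb t).
Proof.
move=> tB i; have /andP[h0 h1] := tB (fin_ord i); rewrite add0r in h1.
rewrite /emb; split; apply/RleP; first by rewrite lerDl mulr_ge0 // ltW.
by rewrite lerD2l -[leRHS]mulr1 ler_wpM2l // ltW.
Qed.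

Lemma cube_measure_pos C : (0 < cube_measure C)%coqR ->
  exists y, C y /\ in_cube p s y.
Proof.
move=> Cpos; case: (pselect (exists y, C y /\ in_cube p s y)) => // miss.
have sub : pre C `<=` ~` unit_box d.
  by move=> t Ct tB; apply: miss; exists (emb t); split => //; exact: emb_unit_box.
have C0 : out (pre C) = 0%E.
  have mC : measurable (~` unit_box d) by apply: measurableC; exact: measurable_box.
  apply/eqP; rewrite eq_le out_ge0 andbT; apply: le_trans (out_le mC sub) _.
  by change (cube_prob d (~` unit_box d) <= 0)%E; rewrite cube_prob_outside.
by move: Cpos; rewrite /cube_measure C0 /= => /RltP; rewrite ltxx.
Qed.

Lemma cube_measure_full C : (forall y, in_cube p s y -> C y) ->
  cube_measure C = 1%coqR.
Proof.
move=> HC; rewrite /cube_measure (_ : out _ = 1%E) //.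
apply/eqP; rewrite eq_le out_le1 /=; apply: out_ge => M mM CM.
rewrite -(cube_prob_unit_box d); apply: le_measure; rewrite ?inE //.
  exact: measurable_box.
by move=> t tB; apply: CM; apply: HC; exact: emb_unit_box.
Qed.

End pullback.
End UniformCube.

Lemma mix_bounds (t u v lo hi : R) : 0 <= t <= 1 ->
  lo <= u <= hi -> lo <= v <= hi -> lo <= t * u + (1 - t) * v <= hi.
Proof. intros Ht Hu Hv; split; nra. Qed.

Lemma mix_weight (a q b y : R) : -1/2 <= a <= 1/2 -> 18 <= b <= q -> 1 <= y <= 2 ->
  let t := (y - a) / (q - a) in
  0 <= t <= 1 /\ t * q + (1 - t) * a = y /\ t * (b + 1/2) <= 4.
Proof.
  intros Ha Hb Hy t.
  assert (Ht : t * (q - a) = y - a) by (unfold t; field; lra).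
  assert (T0 : 0 <= t).
  { unfold t; apply Rmult_le_pos; [lra | left; apply Rinv_0_lt_compat; lra]. }
  assert (T1 : t * (b - 1/2) <= 5/2) by nra.
  split; [split; nra|]; split; nra.
Qed.

Lemma mix_far (t q w b : R) : 0 <= t <= 1 -> t * (b + 1/2) <= 4 ->
  -1/2 <= q -> b <= w -> b - 4 <= t * q + (1 - t) * w.
Proof. intros Ht Htb Hq Hw; nra. Qed.

Definition coord {d : nat} (i : Fin.t d) : nat := proj1_sig (Fin.to_nat i).

Lemma coord_lt {d : nat} (i : Fin.t d) : (coord i < d)%nat.
Proof. exact (proj2_sig (Fin.to_nat i)). Qed.

Lemma coord_inj {d : nat} (i i' : Fin.t d) : coord i = coord i' -> i = i'.
Proof.
  intros H; rewrite <- (Fin.of_nat_to_nat_inv i), <- (Fin.of_nat_to_nat_inv i').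
  unfold coord in H; revert H.
  destruct (Fin.to_nat i) as [a Ha], (Fin.to_nat i') as [b Hb]; simpl; intros ->.
  apply Fin.of_nat_ext.
Qed.

Definition far_dist (d : nat) : R := 4 * INR d + 14.

Definition vertex (d j : nat) : point d :=
  fun i => if Nat.eqb (S (coord i)) j then far_dist d else 0.

(* Given points W j of C near the vertices, we fix the
   coordinates of x one at a time: at stage k the coordinates below k of the
   base point W 0 and of the far points W j (k < j <= d) equal those of x, the
   remaining coordinates stay in [-1/2, 1/2], except the far coordinate of
   each far point, which stays above far_bound k.  Each step replaces every
   point by a point on its segment towards W (S k).  At stage d, W 0 = x. *)
Section sweep.
Variables (d : nat) (C : rset d) (x : point d).
Hypothesis C_convex : convex C.
Hypothesis x_cube : in_cube (fun _ => 1) 1 x.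

Definition live (k j : nat) : Prop := j = 0%nat \/ (k < j <= d)%nat.

Definition far_bound (k : nat) : R := far_dist d - 4 * INR k.

Record stage (k : nat) (W : nat -> point d) : Prop := {
  stage_in : forall j, live k j -> C (W j);
  stage_fixed : forall j i, live k j -> (coord i < k)%nat -> W j i = x i;
  stage_small : forall j i, live k j -> (k <= coord i)%nat -> S (coord i) <> j ->
    -1/2 <= W j i <= 1/2;
  stage_far : forall j i, live k j -> S (coord i) = j -> far_bound k <= W j i }.

Lemma far_bound_large k : (k < d)%nat -> 18 <= far_bound k.
Proof.
  intros H; unfold far_bound, far_dist.
  assert (INR k + 1 <= INR d) by (rewrite <- S_INR; apply le_INR; lia).
  lra.
Qed.

Lemma stage_step k W : (k < d)%nat -> stage k W -> exists W', stage (S k) W'.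
Proof.
  intros Hk [Win Wfix Wsmall Wfar].
  set (ik := Fin.of_nat_lt Hk).
  assert (Hik : coord ik = k) by (unfold coord, ik; rewrite Fin.to_nat_of_nat; reflexivity).
  set (P := W (S k)).
  assert (HP : far_bound k <= P ik <= P ik)
    by (split; [apply Wfar; [right; lia | rewrite Hik; reflexivity] | lra]).
  assert (Hb := far_bound_large k Hk).
  (* each live point moves towards P with the weight fixing coordinate ik *)
  set (t := fun a : point d => (x ik - a ik) / (P ik - a ik)).
  set (W' := fun j i => t (W j) * P i + (1 - t (W j)) * W j i).
  assert (live_S : forall j, live (S k) j -> live k j /\ j <> S k)
    by (intros j [->|Hj]; split; unfold live; lia).
  assert (Wt : forall j, live (S k) j ->
    0 <= t (W j) <= 1 /\ W' j ik = x ik /\ t (W j) * (far_bound k + 1/2) <= 4).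
  { intros j Hj; destruct (live_S j Hj) as [Hj' Hne].
    apply mix_weight; [apply Wsmall; auto; lia | lra | generalize (x_cube ik); lra]. }
  assert (HPsmall : forall i, (S k <= coord i)%nat -> -1/2 <= P i <= 1/2)
    by (intros i Hi; apply Wsmall; [right; lia | lia | lia]).
  exists W'; split.
  - intros j Hj; destruct (Wt j Hj) as [Ht _].
    apply C_convex; [apply Win; right; lia | apply Win, live_S, Hj | exact Ht].
  - intros j i Hj Hi; destruct (Nat.eq_dec (coord i) k) as [e|ne].
    + rewrite (coord_inj i ik) by congruence; apply Wt, Hj.
    + destruct (live_S j Hj) as [Hj' _]; unfold W', P.
      rewrite (Wfix j i Hj' ltac:(lia)), (Wfix (S k) i ltac:(right; lia) ltac:(lia)); ring.
  - intros j i Hj Hi Hne; destruct (live_S j Hj) as [Hj' _].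
    apply mix_bounds; [apply Wt, Hj | apply HPsmall, Hi | apply Wsmall; auto; lia].
  - intros j i Hj He; destruct (live_S j Hj) as [Hj' _]; destruct (Wt j Hj) as [Ht [_ Htb]].
    unfold far_bound; rewrite S_INR.
    replace (far_dist d - 4 * (INR k + 1)) with (far_bound k - 4) by (unfold far_bound; ring).
    apply mix_far; [exact Ht | exact Htb | apply HPsmall | apply Wfar; auto].
    unfold live in Hj; lia.
Qed.

Lemma stage_reach W : stage 0 W -> forall k, (k <= d)%nat -> exists W', stage k W'.
Proof.
  intros H0; induction k as [|k IH]; intros Hk; [exists W; exact H0|].
  destruct (IH ltac:(lia)) as [W' HW']; exact (stage_step k W' ltac:(lia) HW').
Qed.

Lemma stage_final W : stage d W -> C x.
Proof.
  intros [Win Wfix _ _].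
  replace x with (W 0%nat) by (apply functional_extensionality; intros i;
    apply Wfix; [left; reflexivity | apply coord_lt]).
  apply Win; left; reflexivity.
Qed.

Lemma stage_init W : (forall j, (j <= d)%nat -> C (W j) /\ in_cube (vertex d j) (1/2) (W j)) ->
  stage 0 W.
Proof.
  assert (Hlive : forall j, live 0 j -> (j <= d)%nat) by (intros j [->|]; lia).
  intros HW; split.
  - intros j Hj; apply HW, Hlive, Hj.
  - intros j i _ Hi; lia.
  - intros j i Hj _ Hne; destruct (HW j (Hlive j Hj)) as [_ Hb]; specialize (Hb i).
    unfold vertex in Hb; rewrite (proj2 (Nat.eqb_neq _ _) Hne) in Hb; lra.
  - intros j i Hj He; destruct (HW j (Hlive j Hj)) as [_ Hb]; specialize (Hb i).
    unfold vertex in Hb; rewrite (proj2 (Nat.eqb_eq _ _) He) in Hb.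
    unfold far_bound; simpl; lra.
Qed.

End sweep.

Lemma convex_contains_cube d (C : rset d) : convex C ->
  (forall j, (j <= d)%nat -> exists y, C y /\ in_cube (vertex d j) (1/2) y) ->
  forall x, in_cube (fun _ => 1) 1 x -> C x.
Proof.
  intros Cconv Hmeet x Hx.
  assert (pick : forall j, exists y, (j <= d)%nat -> C y /\ in_cube (vertex d j) (1/2) y).
  { intros j; destruct (Compare_dec.le_lt_dec j d) as [h|h].
    - destruct (Hmeet j h) as [y Hy]; exists y; intros _; exact Hy.
    - exists x; intros; lia. }
  set (W := fun j => proj1_sig (constructive_indefinite_description _ (pick j))).
  assert (H0 : stage d C x 0 W)
    by (apply stage_init; intros j Hj; exact (proj2_sig (constructive_indefinite_description _ (pick j)) Hj)).
  destruct (stage_reach d C x Cconv Hx W H0 d (le_n d)) as [W' HW'].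
  exact (stage_final d C x W' HW').
Qed.

Theorem mainTheorem8 (d k : nat) (alpha : R) :
  (1 <= d)%nat -> (d + 2 <= k)%nat -> 0 < alpha < 1 ->
  exists mu : nat -> rset d -> R,
    (forall j, (j < k)%nat -> ac_probability_measure (mu j)) /\
    ~ (exists C : rset d, convex C /\
         forall j, (j < k)%nat -> mu j C = alpha).
Proof.
  intros _ Hk Ha.
  exists (fun j => if Nat.leb j d then UniformCube.cube_measure (vertex d j) (1/2)
                   else UniformCube.cube_measure (fun _ => 1) 1).
  split.
  - intros j _; destruct (Nat.leb j d); apply UniformCube.cube_measure_ac; lra.
  - intros [C [Cconv HC]].
    assert (Hmeet : forall j, (j <= d)%nat ->
              exists y, C y /\ in_cube (vertex d j) (1/2) y).
    { intros j Hj; specialize (HC j ltac:(lia)); cbv beta in HC.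
      rewrite (proj2 (Nat.leb_le j d) Hj) in HC.
      apply UniformCube.cube_measure_pos; lra. }
    assert (Hfull : UniformCube.cube_measure (fun _ => 1) 1 C = 1).
    { apply UniformCube.cube_measure_full; [lra|].
      exact (convex_contains_cube d C Cconv Hmeet). }
    specialize (HC (S d) ltac:(lia)); cbv beta in HC.
    rewrite (proj2 (Nat.leb_gt (S d) d) (Nat.lt_succ_diag_r d)) in HC; lra.
Qed.
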